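(* Let $n\ge5$ and $S=\{1,s\}\subset\mathbb Z_n$ with $s$ an integer, $1<s<n/2$. Let $\mathbb K$ be a field of characteristic $0$. (1) If $s=2$, then for every $m\ge1$, $\Omega_m(\vec C_n^S)$ has the basis of $2n$ elements $\{\alpha_a^{(m)},\beta_a^{(m)}\}_{a\in\mathbb Z_n}$, where \[\alpha_a^{(m)}=e_{a,(a+1),\ldots,(a+m)},\qquad \beta_a^{(m)}=\sum_{j=1}^m(-1)^{m-j}\,e_{a,a+1,\ldots,a+j-1,a+j+1,a+j+2,\ldots,a+m+1}\] (indices mod $n$). (2) If $s\ne2$, then $\Omega_2(\vec C_n^S)$ has the basis of $n$ elements $\{\gamma_a\}_{a\in\mathbb Z_n}$ with $\gamma_a=e_{a,a+1,a+1+s}-e_{a,a+s,a+1+s}$, and $\Omega_m(\vec C_n^S)=0$ for all $m\ge3$.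
   Context: GLMY path complex over a field $\mathbb K$ of characteristic $0$: elementary paths $e_{v_0\cdots v_n}$, boundary $\partial e_{v_0\cdots v_n}=\sum_{j}(-1)^j e_{v_0\cdots\widehat{v_j}\cdots v_n}$, paths with two equal consecutive vertices set to $0$; $A_n(G)$ = span of paths along arrows of $G$; $\Omega_0=A_0$, $\Omega_1=A_1$, $\Omega_n=\{u\in A_n:\partial u\in A_{n-1}\}$. The circulant digraph $\vec{C}_n^S$ has vertex set $\mathbb Z_n$ and an arrow $a\to a+s$ for each $a\in\mathbb Z_n$, $s\in S$. *)

From HB Require Import structures.
From mathcomp Require Import all_boot all_order all_algebra.
Set Implicit Arguments. Unset Strict Implicit. Unset Printing Implicit Defensive.
Import Order.TTheory GRing.Theory Num.Theory.
Local Open Scope ring_scope.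

(* An m-chain is a K-valued function on sequences of m+1 vertices; the
   elementary path e_{v0...vm} is the indicator function of the tuple
   (v0,...,vm) if the path is regular (no two equal consecutive vertices),
   and 0 otherwise (GLMY convention). *)

Section PathComplex.
Variables (K : fieldType) (V : finType).

Definition chain (m : nat) := {ffun (m.+1).-tuple V -> K}.

Definition regular (s : seq V) : bool :=
  if s is x :: p then path (fun a b => a != b) x p else true.

Definition ep (m : nat) (s : seq V) : chain m :=
  [ffun t : (m.+1).-tuple V => ((val t == s) && regular s)%:R].

Definition del (j : nat) (s : seq V) : seq V := take j s ++ drop j.+1 s.

(* boundary operator, extended linearly from
   d e_{v0..v_{m+1}} = sum_j (-1)^j e_{v0..^vj..v_{m+1}} *)
Definition bd (m : nat) (u : chain m.+1) : chain m :=
  [ffun t' => \sum_(t : (m.+2).-tuple V)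
       u t * \sum_(j < m.+2) (-1) ^+ j * ep m (del j (val t)) t'].

Variable arr : rel V.

Definition allowed (s : seq V) : bool :=
  regular s && (if s is x :: p then path arr x p else false).

(* A_m(G): span of allowed elementary paths = chains supported on allowed paths *)
Definition Apath (m : nat) (u : chain m) : bool :=
  [forall t, (u t != 0) ==> allowed (val t)].

Definition Omega (m : nat) : pred (chain m) :=
  match m return pred (chain m) with
  | 0 => fun u => Apath u
  | m'.+1 => fun u => Apath u && Apath (bd u)
  end.

End PathComplex.

Definition lincomb (K : fieldType) (V I : finType) (m : nat)
  (c : I -> K) (f : I -> chain K V m) : chain K V m :=
  [ffun t => \sum_i c i * f i t].

Definition is_basis (K : fieldType) (V I : finType) (m : nat)
  (P : pred (chain K V m)) (f : I -> chain K V m) : Prop :=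
  [/\ forall i, P (f i),
      forall c : I -> K, lincomb c f = 0 -> forall i, c i = 0
    & forall u, P u -> exists c : I -> K, u = lincomb c f].

Definition circ_arr (n s : nat) : rel 'Z_n :=
  fun a b => (b == a + 1) || (b == a + s%:R).

Definition alpha (K : fieldType) (n m : nat) (a : 'Z_n) : chain K 'Z_n m :=
  ep K m [seq a + i%:R | i <- iota 0 m.+1].

Definition beta (K : fieldType) (n m : nat) (a : 'Z_n) : chain K 'Z_n m :=
  [ffun t => \sum_(1 <= j < m.+1)
     (-1) ^+ (m - j) * ep K m [seq a + i%:R | i <- iota 0 m.+2 & i != j] t].

Definition gamma (K : fieldType) (n s : nat) (a : 'Z_n) : chain K 'Z_n 2 :=
  [ffun t => ep K 2 [:: a; a + 1; a + 1 + s%:R] t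
           - ep K 2 [:: a; a + s%:R; a + 1 + s%:R] t].

Arguments circ_arr : clear implicits.
Arguments alpha : clear implicits.
Arguments beta : clear implicits.
Arguments gamma : clear implicits.

(* Membership in Omega is a local condition: a chain u in A_(m+1) lies in Omega_(m+1) iff,
   for every allowed path t and every interior position i+1 with t_i <> t_(i+2) such that
   t_i -> t_(i+2) is not an arrow, the coefficients of u on the paths obtained from t by
   changing t_(i+1) sum to zero.
   In C_n^{1,s} an allowed path is a start vertex followed by a word of steps in {1, s}, and
   since 2s < n a sum of two steps is again a step only for 1 + 1 = s = 2.  The local
   conditions therefore say that exchanging two adjacent distinct steps negates a coefficient
   and that two adjacent equal steps (other than 1, 1 when s = 2) kill it.  Reordering the
   steps, an element of Omega is determined by its coefficients on normal-form paths: none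
   when s <> 2 and m >= 3, the paths with steps (1, s) when s <> 2 and m = 2, and the unit
   runs and the unit runs followed by one 2-step when s = 2.  The proposed vectors are dual
   to these normal forms, which gives both linear independence and spanning. *)

From HB Require Import structures.
From mathcomp Require Import all_boot all_order all_algebra.
From mathcomp Require Import zify ring.
Set Implicit Arguments. Unset Strict Implicit. Unset Printing Implicit Defensive.
Import Order.TTheory GRing.Theory Num.Theory.
Local Open Scope ring_scope.

Section TupleSurgery.
Variables (V : finType) (v0 : V).
Local Notation "t `_ i" := (nth v0 t i).

Lemma mkseq_tuple_proof N (f : nat -> V) : size (mkseq f N) == N.
Proof. by rewrite size_mkseq. Qed.
Definition mkseq_tuple N (f : nat -> V) : N.-tuple V := Tuple (mkseq_tuple_proof N f).

Lemma nth_mkseq_tuple N f p : (p < N)%N -> (mkseq_tuple N f)`_p = f p.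
Proof. by move=> hp; rewrite /= nth_mkseq. Qed.

Lemma eq_from_nth_tuple N (t1 t2 : N.-tuple V) :
  (forall p, (p < N)%N -> t1`_p = t2`_p) -> t1 = t2.
Proof.
move=> h; apply: val_inj; apply: (eq_from_nth (x0 := v0)); first by rewrite !size_tuple.
by move=> i; rewrite size_tuple => /h.
Qed.

Definition ins N k v (t : N.-tuple V) : N.+1.-tuple V :=
  mkseq_tuple N.+1 (fun p => if (p < k)%N then t`_p else if p == k then v else t`_p.-1).
Definition upd N (t : N.-tuple V) k v : N.-tuple V :=
  mkseq_tuple N (fun p => if p == k then v else t`_p).
Definition del_tuple N k (t : N.+1.-tuple V) : N.-tuple V :=
  mkseq_tuple N (fun p => if (p < k)%N then t`_p else t`_p.+1).

Lemma nth_upd N (t : N.-tuple V) k v p : (p < N)%N ->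
  (upd t k v)`_p = if p == k then v else t`_p.
Proof. exact: nth_mkseq_tuple. Qed.

Lemma nth_upd_ne N (t : N.-tuple V) k v p : (p < N)%N -> p != k ->
  (upd t k v)`_p = t`_p.
Proof. by move=> hp hk; rewrite nth_upd // (negbTE hk). Qed.

Lemma upd_nth N (t : N.-tuple V) k : upd t k t`_k = t.
Proof. by apply: eq_from_nth_tuple => p hp; rewrite nth_upd //; case: eqP => // ->. Qed.

Lemma nth_del j (q : seq V) p : (j < size q)%N ->
  (del j q)`_p = if (p < j)%N then q`_p else q`_p.+1.
Proof.
move=> h; rewrite /del nth_cat size_take h.
case: ltnP => hp; first by rewrite nth_take.
by rewrite nth_drop; congr nth; lia.
Qed.

Lemma size_del j (q : seq V) : (j < size q)%N -> size (del j q) = (size q).-1.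
Proof. by move=> h; rewrite /del size_cat size_take h size_drop; lia. Qed.

Lemma eq_ins N k v (t : N.+2.-tuple V) (t' : N.+1.-tuple V) : (k < N.+2)%N ->
  (t == ins k v t') = (v == t`_k) && (val t' == del k (val t)).
Proof.
move=> hk; apply/eqP/andP => [->|[/eqP -> /eqP ht']].
  rewrite nth_mkseq_tuple // ltnn eqxx; split => //; apply/eqP.
  apply: (eq_from_nth (x0 := v0)); first by rewrite size_del ?size_tuple.
  move=> p; rewrite size_tuple => hp; rewrite nth_del ?size_tuple //.
  case: ltnP => hpk; first by rewrite nth_mkseq_tuple ?hpk //; lia.
  by rewrite nth_mkseq_tuple ?ifF //; lia.
apply: eq_from_nth_tuple => p hp; rewrite nth_mkseq_tuple // ht'.
case: ltngtP => h; rewrite ?nth_del ?size_tuple ?h //.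
by rewrite ifF; [congr nth|]; lia.
Qed.

Lemma ins_upd N k v (t : N.+1.-tuple V) : (k <= N.+1)%N ->
  ins k v t = upd (ins k v0 t) k v.
Proof. by move=> hk; apply: eq_from_nth_tuple => p hp; rewrite !nth_mkseq_tuple //; case: ltngtP. Qed.

Lemma ins_del_tuple N k v (t : N.+2.-tuple V) : (k <= N.+1)%N ->
  ins k v (del_tuple k t) = upd t k v.
Proof.
move=> hk; apply: eq_from_nth_tuple => p hp; rewrite [LHS]nth_mkseq_tuple // [RHS]nth_mkseq_tuple //.
case: ltngtP => h //; first by rewrite nth_mkseq_tuple ?h //; lia.
by rewrite nth_mkseq_tuple ?ifF; [congr nth| |]; lia.
Qed.

End TupleSurgery.

Section LocalOmega.
Variables (K : fieldType) (V : finType) (arr : rel V) (v0 : V).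
Hypothesis arr_irr : irreflexive arr.
Local Notation "t `_ i" := (nth v0 t i).
Local Notation chain := (chain K V).
Local Notation allowed := (allowed arr).
Local Notation Apath := (Apath arr).
Local Notation ins := (ins v0).
Local Notation upd := (upd v0).

Lemma arr_neq x y : arr x y -> x != y.
Proof. by apply: contraTneq => ->; rewrite arr_irr. Qed.

Lemma regularP N (t : N.+1.-tuple V) :
  reflect (forall p, (p < N)%N -> t`_p != t`_p.+1) (regular (val t)).
Proof.
case: t => [[|x q] //= /[!eqSS] /eqP <-].
by apply: (iffP (pathP v0)) => h p /h.
Qed.

Lemma allowedP N (t : N.+1.-tuple V) :
  reflect (forall p, (p < N)%N -> arr t`_p t`_p.+1) (allowed (val t)).
Proof.
apply: (iffP andP) => [[_]|h].
  by case: t => [[|x q] //= /[!eqSS] /eqP <- /(pathP v0)].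
split; first by apply/regularP => p /h /arr_neq.
by case: t h => [[|x q] //= /[!eqSS] /eqP <- h]; apply/(pathP v0).
Qed.

Lemma Apath_out N (u : chain N) t : Apath u -> ~~ allowed (val t) -> u t = 0.
Proof. by move=> /forallP/(_ t)/implyP h; apply: contraNeq. Qed.

Lemma Omega_out N (u : chain N.+1) t : Omega arr u -> ~~ allowed (val t) -> u t = 0.
Proof. by case/andP => hu _; apply: Apath_out. Qed.

(* [t] contributes to the coefficient of [e_t'] exactly when deleting some vertex [k] of [t]
   yields [t'], i.e. when [t = ins k v t']. *)
Lemma bd_ins N (u : chain N.+1) (t' : N.+1.-tuple V) :
  bd u t' = (regular (val t'))%:R *
     \sum_(k < N.+2) (-1) ^+ k * \sum_v u (ins k v t').
Proof.
have sum_ins (j : 'I_N.+2) :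
    \sum_v u (ins j v t') = \sum_t u t * (val t' == del j (val t))%:R.
  transitivity (\sum_v \sum_t u t * (t == ins j v t')%:R).
    apply: eq_bigr => v _; rewrite (bigD1 (ins j v t')) //= eqxx mulr1.
    by rewrite big1 ?addr0 // => t /negbTE ->; rewrite mulr0.
  rewrite exchange_big /=; apply: eq_bigr => t _; rewrite -mulr_sumr; congr (_ * _).
  under eq_bigr => v _ do rewrite eq_ins //.
  by rewrite (bigD1 t`_j) //= eqxx /= big1 ?addr0 // => v /negbTE ->.
rewrite (eq_bigr (fun k : 'I_N.+2 => \sum_t (-1) ^+ k * (u t * (val t' == del k (val t))%:R)));
  last by move=> k _; rewrite sum_ins mulr_sumr.
rewrite exchange_big /= mulr_sumr ffunE; apply: eq_bigr => t _.
rewrite !mulr_sumr; apply: eq_bigr => j _; rewrite ffunE.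
by case: eqP => [<-|] /=; [ring | rewrite !mulr0].
Qed.

Lemma ins_not_allowed N k v (t' : N.+1.-tuple V) i : (k <= N.+1)%N -> (i < N)%N ->
  ~~ arr t'`_i t'`_i.+1 -> k != i.+1 -> ~~ allowed (val (ins k v t')).
Proof.
move=> hk hi hb hki; apply/allowedP => h; move/negP: hb; apply.
case: (leqP k i) => hki'.
  have := h i.+1 (leq_trans (ltnSn _) (hi : (i.+1 < N.+1)%N)).
  by rewrite !nth_mkseq_tuple ?ifF //; lia.
by have := h i (leq_trans hi (leqnSn _)); rewrite !nth_mkseq_tuple ?ifT //; lia.
Qed.

Lemma sum_ins_nonarrow N (u : chain N.+1) (t' : N.+1.-tuple V) i :
  Apath u -> (i < N)%N -> ~~ arr t'`_i t'`_i.+1 ->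
  \sum_(k < N.+2) (-1) ^+ k * \sum_v u (ins k v t') =
  (-1) ^+ i.+1 * \sum_v u (ins i.+1 v t').
Proof.
move=> hu hi hb; have hi1 : (i.+1 < N.+2)%N by lia.
rewrite (bigD1 (Ordinal hi1)) //= [X in _ + X]big1 ?addr0 // => k hk.
rewrite big1 ?mulr0 // => v _; apply: Apath_out hu _.
by apply: (ins_not_allowed _ _ hi hb) => //; rewrite -ltnS.
Qed.

Lemma Omega_intro N (u : chain N.+1) : Apath u ->
  (forall (t : N.+2.-tuple V) i, (i < N)%N -> ~~ arr t`_i t`_i.+2 ->
      \sum_v u (upd t i.+1 v) = 0) -> Omega arr u.
Proof.
move=> hu hc; apply/andP; split => //; apply/forallP => t'; apply/implyP.
apply: contraTT => hna; apply/eqP.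
have /existsP [[i hi] /= hb] : [exists p : 'I_N, ~~ arr t'`_p t'`_p.+1].
  apply: contraR hna => /existsPn h; apply/allowedP => p hp.
  by have /negPn := h (Ordinal hp).
rewrite bd_ins (sum_ins_nonarrow hu hi hb).
have hk : (i.+1 <= N.+1)%N by lia.
under eq_bigr => v _ do rewrite (ins_upd _ _ _ hk).
by rewrite hc ?mulr0 ?eqxx // !nth_mkseq_tuple ?ltnSn ?ifF //; lia.
Qed.

Lemma Omega_sum_upd N (u : chain N.+1) (t : N.+2.-tuple V) i :
  Omega arr u -> allowed (val t) -> (i < N)%N ->
  ~~ arr t`_i t`_i.+2 -> t`_i.+2 != t`_i -> \sum_v u (upd t i.+1 v) = 0.
Proof.
move=> /andP[hu hbu] /allowedP ha hi hb hne; set t' := del_tuple v0 i.+1 t.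
have ht'i : t'`_i = t`_i by rewrite nth_mkseq_tuple ?ltnSn //; lia.
have ht'i1 : t'`_i.+1 = t`_i.+2 by rewrite nth_mkseq_tuple ?ltnn //; lia.
have hb' : ~~ arr t'`_i t'`_i.+1 by rewrite ht'i ht'i1.
have hreg : regular (val t').
  apply/regularP => p hp; rewrite !nth_mkseq_tuple; try lia.
  case: (ltngtP p i) => h; [rewrite !ifT | rewrite !ifF | rewrite h ltnSn ltnn eq_sym] => //;
    try lia; apply: arr_neq; apply: ha; lia.
have /eqP : bd u t' = 0.
  apply: Apath_out hbu _; apply: contraNN hb' => /allowedP; exact.
rewrite bd_ins hreg mul1r (sum_ins_nonarrow hu hi hb') mulf_eq0 signr_eq0 /=.
have hk : (i.+1 <= N.+1)%N by lia.
by under eq_bigr => v _ do rewrite (ins_del_tuple _ _ _ hk); move/eqP.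
Qed.

Lemma sum_upd_indicator N (t : N.-tuple V) k (q : seq V) : size q = N -> (k < N)%N ->
  \sum_v (val (upd t k v) == q)%:R =
  [forall p : 'I_N, (val p != k) ==> (t`_p == q`_p)]%:R :> K.
Proof.
move=> hq hk.
have upd_eq v : (val (upd t k v) == q) =
    (v == q`_k) && [forall p : 'I_N, (val p != k) ==> (t`_p == q`_p)].
  apply/eqP/andP => [<-|[/eqP -> /forallP h]].
    rewrite nth_upd // eqxx; split => //; apply/forallP => p; apply/implyP => hp.
    by rewrite nth_upd // (negbTE hp).
  apply: (eq_from_nth (x0 := v0)); rewrite ?size_tuple // => p hp.
  rewrite nth_upd //; case: eqP => [->//|/eqP hpk].
  by have /implyP/(_ hpk)/eqP := h (Ordinal hp).
under eq_bigr => v _ do rewrite upd_eq.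
by rewrite (bigD1 q`_k) //= eqxx big1 ?addr0 // => v /negbTE ->.
Qed.

Lemma Apath_sub_lincomb (I : finType) N (u : chain N) c (f : I -> chain N) :
  Apath u -> (forall i, Apath (f i)) -> Apath (u - lincomb c f).
Proof.
move=> hu hf; apply/forallP => t; apply/implyP; apply: contraR => hna; apply/eqP.
rewrite !ffunE (Apath_out hu hna) sub0r big1 ?oppr0 // => i _.
by rewrite (Apath_out (hf i) hna) mulr0.
Qed.

Lemma bd_sub_lincomb (I : finType) N (u : chain N.+1) c (f : I -> chain N.+1) :
  bd (u - lincomb c f) = bd u - lincomb c (fun i => bd (f i)).
Proof.
apply/ffunP => t'; rewrite !ffunE.
under eq_bigr => t _ do rewrite !ffunE mulrBl mulr_suml.
rewrite sumrB; congr (_ - _); rewrite exchange_big /=; apply: eq_bigr => i _.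
by rewrite ffunE mulr_sumr; apply: eq_bigr => t _; rewrite mulrA.
Qed.

Lemma Omega_sub_lincomb (I : finType) N (u : chain N) c (f : I -> chain N) :
  Omega arr u -> (forall i, Omega arr (f i)) -> Omega arr (u - lincomb c f).
Proof.
case: N u f => [|N] u f; first exact: Apath_sub_lincomb.
move=> /andP[hu hbu] hf; apply/andP; split.
  by apply: Apath_sub_lincomb => // i; case/andP: (hf i).
by rewrite bd_sub_lincomb; apply: Apath_sub_lincomb => // i; case/andP: (hf i).
Qed.

End LocalOmega.

Lemma lincomb_dual (K : fieldType) (V I : finType) m (c : I -> K)
    (f : I -> chain K V m) t i0 :
  (forall i, f i t = (i == i0)%:R) -> lincomb c f t = c i0.
Proof.
move=> h; rewrite ffunE (bigD1 i0) //= h eqxx mulr1 big1 ?addr0 // => i hi.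
by rewrite h (negbTE hi) mulr0.
Qed.

Lemma is_basis_dual (K : fieldType) (V I : finType) m (P : pred (chain K V m))
    (f : I -> chain K V m) (tau : I -> m.+1.-tuple V) :
  (forall i, P (f i)) -> (forall i j, f i (tau j) = (i == j)%:R) ->
  (forall u c, P u -> P (u - lincomb c f)) ->
  (forall w, P w -> (forall j, w (tau j) = 0) -> w = 0) ->
  is_basis P f.
Proof.
move=> hf hdual hsub hinj; split => // [c hc j|u hu].
  by rewrite -(lincomb_dual c (hdual^~ j)) hc ffunE.
exists (fun j => u (tau j)); apply/eqP; rewrite -subr_eq0; apply/eqP/hinj => [|j].
  exact: hsub.
by rewrite 2!ffunE (lincomb_dual _ (hdual^~ j)) subrr.
Qed.

Lemma add_steps (V : zmodType) (a b c : V) : (b - a) + (c - b) = c - a.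
Proof. by rewrite addrC addrA subrK. Qed.

Lemma filter_iota_neq m j : (j <= m.+1)%N ->
  [seq i <- iota 0 m.+2 | i != j] = [seq (if (p < j)%N then p else p.+1) | p <- iota 0 m.+1].
Proof.
move=> hj; set k := (m.+1 - j)%N.
have -> : m.+2 = (j + k.+1)%N by rewrite /k; lia.
have -> : m.+1 = (j + k)%N by rewrite /k; lia.
rewrite !iotaD filter_cat map_cat /= add0n eqxx /=; congr (_ ++ _).
  rewrite (_ : [seq i <- iota 0 j | i != j] = iota 0 j); last first.
    by apply/all_filterP/allP => x; rewrite mem_iota; lia.
  rewrite -{1}(map_id (iota 0 j)); apply/eq_in_map => x; rewrite mem_iota => hx.
  by rewrite ifT //; lia.
rewrite (_ : [seq i <- iota j.+1 k | i != j] = iota j.+1 k); last first.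
  by apply/all_filterP/allP => x; rewrite mem_iota; lia.
rewrite -addn1 addnC iotaDl; apply/eq_in_map => x; rewrite mem_iota => hx.
by rewrite ifF ?add1n //; lia.
Qed.

Section Circulant.
Variables (K : fieldType) (n s : nat).
Hypotheses (s_gt1 : (1 < s)%N) (s2_lt_n : (s.*2 < n)%N).
Local Notation Z := 'Z_n.

Lemma natZ_inj a b : (a%:R : Z) = b%:R -> (a < n)%N -> (b < n)%N -> a = b.
Proof.
have n_gt1 : (1 < n)%N by lia.
by move=> /(congr1 val) + ha hb; rewrite /= !val_Zp_nat // !modn_small.
Qed.

Definition step (x : Z) := (x == 1) || (x == s%:R).

Lemma circ_arrE a b : circ_arr n s a b = step (b - a).
Proof. by rewrite /circ_arr /step !subr_eq addrC [s%:R + _]addrC. Qed.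

Lemma stepP x : step x -> x = 1 \/ x = s%:R.
Proof. by case/orP => /eqP ->; [left|right]. Qed.

Lemma step_nat x : step x -> exists2 k, (k = 1 \/ k = s)%N & x = k%:R.
Proof. by case/stepP => ->; [exists 1%N; [left|] | exists s; [right|]]. Qed.

Lemma step_1 : step 1. Proof. by rewrite /step eqxx. Qed.
Lemma step_s : step s%:R. Proof. by rewrite /step eqxx orbT. Qed.

Lemma one_neq_s : (1 : Z) != s%:R.
Proof. by apply/eqP => /(@natZ_inj 1 s); lia. Qed.

(* The sums 2, 1 + s and 2s are distinct mod n because 2s < n. *)
Lemma step_addE a b c d : step a -> step b -> step c -> step d -> a + b = c + d ->
  (a = c /\ b = d) \/ (a = d /\ b = c).
Proof.
move=> /step_nat[ka ha ->] /step_nat[kb hb ->] /step_nat[kc hc ->] /step_nat[kd hd ->].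
rewrite -!natrD => /natZ_inj h.
have {}h : (ka + kb = kc + kd)%N by apply: h; lia.
have [[-> ->]|[-> ->]] : (ka = kc /\ kb = kd) \/ (ka = kd /\ kb = kc) by lia.
  by left.
by right.
Qed.

Lemma step_add a b : step a -> step b -> step (a + b) -> [/\ a = 1, b = 1 & s = 2%N].
Proof.
move=> /step_nat[ka ha ->] /step_nat[kb hb ->] /step_nat[kc hc].
rewrite -natrD => /natZ_inj h.
have {}h : (ka + kb = kc)%N by apply: h; lia.
by have [-> [-> ->]] : (ka = 1 /\ kb = 1 /\ s = 2)%N by lia.
Qed.

Lemma step_add_neq0 a b : step a -> step b -> a + b != 0.
Proof.
move=> /step_nat[ka ha ->] /step_nat[kb hb ->]; rewrite -natrD.
by apply/eqP => /(@natZ_inj _ 0); lia.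
Qed.

Lemma step_neq0 a : step a -> a != 0.
Proof. by case/step_nat=> k hk ->; apply/eqP => /(@natZ_inj _ 0); lia. Qed.

Lemma circ_arr_irr : irreflexive (circ_arr n s).
Proof. by move=> a; rewrite circ_arrE subrr; apply/negP => /step_neq0/eqP. Qed.

Local Notation arr := (circ_arr n s).
Local Notation chain := (chain K Z).
Local Notation upd := (upd 0).

Lemma allowed_step N (t : N.+1.-tuple Z) p : allowed arr (val t) -> (p < N)%N ->
  step (t`_p.+1 - t`_p).
Proof. by move=> /(allowedP 0 circ_arr_irr) h hp; rewrite -circ_arrE; apply: h. Qed.

Definition swap_steps N (t : N.-tuple Z) i := upd t i.+1 (t`_i + (t`_i.+2 - t`_i.+1)).

Lemma allowed_swap_steps N (t : N.+2.-tuple Z) i : allowed arr (val t) -> (i < N)%N ->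
  allowed arr (val (swap_steps t i)).
Proof.
move=> ha hi; apply/(allowedP 0 circ_arr_irr) => p hp.
rewrite circ_arrE /swap_steps !nth_upd; try lia.
case: (ltngtP p i) => h.
- by rewrite !ifF; try lia; apply: allowed_step.
- case: (ltngtP p i.+1) => h'; first lia.
    by rewrite !ifF; try lia; apply: allowed_step.
  rewrite h' ?eqxx ifF; last lia.
  rewrite (_ : _ - _ = t`_i.+1 - t`_i); last by ring.
  by apply: allowed_step => //; lia.
- rewrite h ?eqxx ifF; last lia.
  rewrite (_ : _ - _ = t`_i.+2 - t`_i.+1); last by ring.
  by apply: allowed_step => //; lia.
Qed.

(* Two steps with the same sum agree up to order, so only [t_(i+1)] itself and the
   vertex of the path taking the two steps in the other order keep the path allowed. *)
Lemma sum_upd_middle N (u : chain N.+1) (t : N.+2.-tuple Z) i :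
  Apath arr u -> allowed arr (val t) -> (i < N)%N ->
  \sum_v u (upd t i.+1 v) = u t +
    (if t`_i.+1 - t`_i == t`_i.+2 - t`_i.+1 then 0 else u (swap_steps t i)).
Proof.
move=> hu ha hi.
have hd : step (t`_i.+1 - t`_i) by apply: allowed_step => //; lia.
have hd1 : step (t`_i.+2 - t`_i.+1) by apply: allowed_step => //; lia.
rewrite /swap_steps; set x := t`_i in hd *; set y := t`_i.+1 in hd hd1 *; set z := t`_i.+2 in hd1 *.
have other v : v != y -> v != x + (z - y) -> u (upd t i.+1 v) = 0.
  move=> h1 h2; apply: Apath_out hu _; apply/negP.
  move/(allowedP 0 circ_arr_irr) => h.
  move: (h i (leq_trans hi (leqnSn _))) (h i.+1 hi).
  rewrite !nth_upd ?eqxx ?ifF; try lia; rewrite !circ_arrE -/x -/z => hv1 hv2.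
  have hsum : (v - x) + (z - v) = (y - x) + (z - y) by ring.
  case: (step_addE hv1 hv2 hd hd1 hsum) => -[h3 _].
    by move/eqP: h1; apply; rewrite -[v](subrK x) h3 subrK.
  by move/eqP: h2; apply; rewrite -h3 addrC subrK.
rewrite (bigD1 y) //= [upd t i.+1 y]upd_nth; congr (_ + _).
case: eqP => hde.
  by rewrite big1 // => v hv; apply: other => //; rewrite -hde addrC subrK.
have hne : x + (z - y) != y by apply/eqP => h; apply: hde; rewrite -[in LHS]h; ring.
by rewrite (bigD1 (x + (z - y))) //= big1 ?addr0 // => v /andP [h1 h2]; exact: other.
Qed.

Lemma Omega_sum_upd_middle N (u : chain N.+1) (t : N.+2.-tuple Z) i :
  Omega arr u -> allowed arr (val t) -> (i < N)%N ->
  ~~ step (t`_i.+2 - t`_i) -> \sum_v u (upd t i.+1 v) = 0.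
Proof.
move=> hu ha hi hns.
apply: (Omega_sum_upd (v0 := 0) circ_arr_irr hu ha hi); first by rewrite circ_arrE.
have hd : step (t`_i.+1 - t`_i) by apply: allowed_step => //; lia.
have hd1 : step (t`_i.+2 - t`_i.+1) by apply: allowed_step => //; lia.
by have := step_add_neq0 hd hd1; rewrite add_steps subr_eq0.
Qed.

Lemma Omega_repeated_step N (u : chain N.+1) (t : N.+2.-tuple Z) i :
  Omega arr u -> allowed arr (val t) -> (i < N)%N ->
  t`_i.+1 - t`_i = t`_i.+2 - t`_i.+1 -> ~~ step ((t`_i.+1 - t`_i) + (t`_i.+1 - t`_i)) ->
  u t = 0.
Proof.
move=> hu ha hi he hns; have /andP[hu1 _] := hu.
rewrite {2}he add_steps in hns.
by have := Omega_sum_upd_middle hu ha hi hns; rewrite sum_upd_middle // he eqxx addr0.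
Qed.

Lemma Omega_swap_steps N (u : chain N.+1) (t : N.+2.-tuple Z) i :
  Omega arr u -> allowed arr (val t) -> (i < N)%N ->
  t`_i.+1 - t`_i != t`_i.+2 - t`_i.+1 -> u t = - u (swap_steps t i).
Proof.
move=> hu ha hi hne; have /andP[hu1 _] := hu.
have hd : step (t`_i.+1 - t`_i) by apply: allowed_step => //; lia.
have hd1 : step (t`_i.+2 - t`_i.+1) by apply: allowed_step => //; lia.
have hns : ~~ step (t`_i.+2 - t`_i).
  apply/negP; rewrite -(add_steps _ t`_i.+1).
  by case/(step_add hd hd1) => h1 h2 _; move: hne; rewrite h1 h2 eqxx.
have := Omega_sum_upd_middle hu ha hi hns; rewrite sum_upd_middle // (negbTE hne).
by move/eqP; rewrite addr_eq0 => /eqP.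
Qed.

Definition run_tuple m (a : Z) : m.+1.-tuple Z := mkseq_tuple m.+1 (fun p => a + p%:R).
Definition skip_tuple m (a : Z) j : m.+1.-tuple Z :=
  mkseq_tuple m.+1 (fun p => a + (if (p < j)%N then p else p.+1)%:R).
Definition one_s_tuple (a : Z) : 3.-tuple Z := [tuple a; a + 1; a + 1 + s%:R].

Lemma double_step_not_step d : s != 2%N -> step d -> ~~ step (d + d).
Proof. by move=> hs hd; apply/negP => /(step_add hd hd) [_ _ /eqP]; apply/negP. Qed.

Lemma double_s_not_step : ~~ step (s%:R + s%:R).
Proof.
apply/negP => /(step_add step_s step_s) [h _ _].
by move: one_neq_s; rewrite h eqxx.
Qed.

Lemma Omega_eq0_s_neq2 N (u : chain N.+2) : s != 2%N -> (0 < N)%N -> Omega arr u -> u = 0.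
Proof.
move=> hs hN hu; apply/ffunP => t; rewrite ffunE.
have [ha|hna] := boolP (allowed arr (val t)); last exact: Omega_out hu hna.
have d0 : step (t`_1 - t`_0) by apply: allowed_step.
have d1 : step (t`_2 - t`_1) by apply: allowed_step.
have d2 : step (t`_3 - t`_2) by apply: allowed_step => //; lia.
have [e01|ne01] := eqVneq (t`_1 - t`_0) (t`_2 - t`_1).
  by apply: (Omega_repeated_step (i := 0)) => //; apply: double_step_not_step.
have [e12|ne12] := eqVneq (t`_2 - t`_1) (t`_3 - t`_2).
  by apply: (Omega_repeated_step (i := 1)) => //; apply: double_step_not_step.
(* the steps alternate, so swapping the first two makes the second and third equal *)
have e02 : t`_1 - t`_0 = t`_3 - t`_2.
  by case: (stepP d0) (stepP d1) (stepP d2) ne01 ne12 => -> [] -> [] -> //; rewrite eqxx.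
rewrite (Omega_swap_steps (i := 0)) //; set t' := swap_steps t 0.
have ht'1 : t'`_1 = t`_0 + (t`_2 - t`_1) by rewrite nth_upd.
have ht'2 : t'`_2 = t`_2 by rewrite nth_upd_ne.
have ht'3 : t'`_3 = t`_3 by rewrite nth_upd_ne //; lia.
rewrite (Omega_repeated_step (t := t') (i := 1)) ?oppr0 //.
- exact: allowed_swap_steps.
- by rewrite ht'1 ht'2 ht'3 -e02; ring.
- by rewrite ht'1 ht'2 (_ : _ - _ = t`_1 - t`_0) ?double_step_not_step //; ring.
Qed.

Lemma Omega2_eq0 (w : chain 2) : s != 2%N -> Omega arr w ->
  (forall a, w (one_s_tuple a) = 0) -> w = 0.
Proof.
move=> hs hw hP; apply/ffunP => t; rewrite ffunE.
have [ha|hna] := boolP (allowed arr (val t)); last exact: Omega_out hw hna.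
have d0 : step (t`_1 - t`_0) by apply: allowed_step.
have d1 : step (t`_2 - t`_1) by apply: allowed_step.
have [e01|ne01] := eqVneq (t`_1 - t`_0) (t`_2 - t`_1).
  by apply: (Omega_repeated_step (i := 0)) => //; apply: double_step_not_step.
have [[e0 e1]|[e0 e1]] : (t`_1 - t`_0 = 1 /\ t`_2 - t`_1 = s%:R) \/
                     (t`_1 - t`_0 = s%:R /\ t`_2 - t`_1 = 1).
- by case: (stepP d0) (stepP d1) ne01 => -> [] ->; rewrite ?eqxx //; [left|right].
- suff -> : t = one_s_tuple t`_0 by apply: hP.
  by apply: (eq_from_nth_tuple (v0 := 0)) => -[|[|[|p]]] hp //=; rewrite -?e1 -e0; ring.
- rewrite (Omega_swap_steps (i := 0)) //.
  suff -> : swap_steps t 0 = one_s_tuple t`_0 by rewrite hP oppr0.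
  apply: (eq_from_nth_tuple (v0 := 0)) => -[|[|[|p]]] hp //=; rewrite ?nth_upd //=.
    by rewrite e1.
  by rewrite -e0 -e1; ring.
Qed.

Lemma nth_unit_steps N (t : N.-tuple Z) k :
  (forall q, (q < k)%N -> t`_q.+1 - t`_q = 1) -> t`_k = t`_0 + k%:R.
Proof.
elim: k => [|k IH] h; first by rewrite addr0.
by rewrite -(subrK t`_k t`_k.+1) h // IH ?mulrSr 1?addrC ?addrA // => q hq; apply: h; lia.
Qed.

Lemma Omega_two_s_steps_eq0 N (w : chain N.+1) (t : N.+2.-tuple Z) p q :
  s = 2%N -> Omega arr w -> allowed arr (val t) -> (p < q <= N)%N ->
  t`_p.+1 - t`_p = s%:R -> t`_q.+1 - t`_q = s%:R -> w t = 0.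
Proof.
move=> hs hw; elim: q t => [|i IH] t ha /andP[hpq hqN] sp sq //.
have hi : (i < N)%N by lia.
have di : step (t`_i.+1 - t`_i) by apply: allowed_step => //; lia.
case: (stepP di) => ei; last first.
  by apply: (Omega_repeated_step (i := i)) => //; rewrite ?ei ?sq // double_s_not_step.
have hip : i != p by apply/eqP => hip; move: one_neq_s; rewrite -sp -hip ei eqxx.
(* move the later [s]-step one position towards the earlier one *)
rewrite (Omega_swap_steps (i := i)) //; last by rewrite ei sq one_neq_s.
rewrite (IH _ (allowed_swap_steps ha hi)) ?oppr0 //; first lia.
  by rewrite nth_upd_ne ?nth_upd_ne //; lia.
rewrite nth_upd ?eqxx ?nth_upd_ne; try lia.
by rewrite -sq; ring.
Qed.

Lemma Omega_lone_s_step_eq0 N (w : chain N.+1) (t : N.+2.-tuple Z) p :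
  s = 2%N -> Omega arr w -> (forall a, w (skip_tuple N.+1 a N.+1) = 0) ->
  allowed arr (val t) -> (p <= N)%N -> t`_p.+1 - t`_p = s%:R ->
  (forall q, (q <= N)%N -> q != p -> t`_q.+1 - t`_q = 1) -> w t = 0.
Proof.
move=> hs hw hB; move hd : (N - p)%N => d.
elim: d t p hd => [|d IH] t p hd ha hpN sp s1.
  have hpN' : p = N by lia.
  subst p; suff -> : t = skip_tuple N.+1 t`_0 N.+1 by apply: hB.
  have ht k : (k <= N)%N -> t`_k = t`_0 + k%:R.
    by move=> hk; apply: nth_unit_steps => q hq; apply: s1; lia.
  apply: (eq_from_nth_tuple (v0 := 0)) => k hk; rewrite nth_mkseq_tuple //.
  case: (ltnP k N.+1) => hkN; first by rewrite (ht k).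
  have -> : k = N.+1 by lia.
  by rewrite -(subrK t`_N t`_N.+1) sp ht // hs -addn2 natrD; ring.
(* move the [s]-step one position towards the end *)
have hpN' : (p < N)%N by lia.
have sp1 : t`_p.+2 - t`_p.+1 = 1 by apply: s1; lia.
rewrite (Omega_swap_steps (i := p)) //; last by rewrite sp sp1 eq_sym one_neq_s.
rewrite (IH _ p.+1 _ (allowed_swap_steps ha hpN')) ?oppr0 //; first lia.
  rewrite nth_upd_ne ?nth_upd ?eqxx; try lia.
  by rewrite -sp; ring.
move=> q hq hqp; case: (eqVneq q p) => [->|hqp'].
  rewrite nth_upd ?eqxx ?nth_upd_ne; try lia.
  by rewrite -sp1; ring.
by rewrite !nth_upd_ne ?s1 //; lia.
Qed.

Lemma Omega_eq0_s2 N (w : chain N.+1) : s = 2%N -> Omega arr w ->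
  (forall a, w (run_tuple N.+1 a) = 0) -> (forall a, w (skip_tuple N.+1 a N.+1) = 0) ->
  w = 0.
Proof.
move=> hs hw hA hB; apply/ffunP => t; rewrite ffunE.
have [ha|hna] := boolP (allowed arr (val t)); last exact: Omega_out hw hna.
have step_s_of_neq1 q : (q <= N)%N -> t`_q.+1 - t`_q != 1 -> t`_q.+1 - t`_q = s%:R.
  move=> hq /negPf h1; have hq' : (q < N.+1)%N by lia.
  by case: (stepP (allowed_step ha hq')) => // e; rewrite e eqxx in h1.
have [/existsP[[p hp] /= sp]|no_s] := boolP [exists q : 'I_N.+1, t`_q.+1 - t`_q != 1];
  last first.
  suff -> : t = run_tuple N.+1 t`_0 by apply: hA.
  apply: (eq_from_nth_tuple (v0 := 0)) => k hk; rewrite nth_mkseq_tuple //.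
  apply: nth_unit_steps => q hq; apply/eqP.
  by move/existsPn: no_s => /(_ (Ordinal (_ : (q < N.+1)%N))) /negPn; apply; lia.
have {}sp := step_s_of_neq1 p hp sp.
have [/existsP[[q hq] /= /andP[hqp sq]]|lone] :=
  boolP [exists q : 'I_N.+1, (val q != p) && (t`_q.+1 - t`_q != 1)].
  have {}sq := step_s_of_neq1 q hq sq.
  case: (ltngtP p q) hqp => // hpq _.
    by apply: (Omega_two_s_steps_eq0 (p := p) (q := q)) => //; lia.
  by apply: (Omega_two_s_steps_eq0 (p := q) (q := p)) => //; lia.
apply: (Omega_lone_s_step_eq0 (p := p)) => // q hqN hqp.
move/existsPn: lone => /(_ (Ordinal (_ : (q < N.+1)%N))) /=.
by rewrite hqp /= => /(_ hqN) /negPn /eqP.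
Qed.

Lemma val_run_tuple m a : val (run_tuple m a) = [seq a + i%:R | i <- iota 0 m.+1].
Proof. by []. Qed.

Lemma val_skip_tuple m a j : (j <= m.+1)%N ->
  val (skip_tuple m a j) = [seq a + i%:R | i <- iota 0 m.+2 & i != j].
Proof. by move=> hj; rewrite filter_iota_neq // -map_comp. Qed.

Lemma sub_shift_nat (a : Z) x y : (y <= x)%N -> (a + x%:R) - (a + y%:R) = (x - y)%:R.
Proof. by move=> h; rewrite natrB //; ring. Qed.

Lemma allowed_run_tuple m a : allowed arr (val (run_tuple m a)).
Proof.
apply/(allowedP 0 circ_arr_irr) => p hp; rewrite circ_arrE !nth_mkseq_tuple; try lia.
by rewrite sub_shift_nat // subSnn step_1.
Qed.

Lemma allowed_skip_tuple m a j : s = 2%N -> (j <= m.+1)%N ->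
  allowed arr (val (skip_tuple m a j)).
Proof.
move=> hs hj; apply/(allowedP 0 circ_arr_irr) => p hp.
rewrite circ_arrE !nth_mkseq_tuple; try lia.
case: (ltnP p j) => h1; case: (ltnP p.+1 j) => h2; try lia.
- by rewrite sub_shift_nat // subSnn step_1.
- rewrite sub_shift_nat; last lia.
  by rewrite (_ : (p.+2 - p)%N = s) ?step_s //; lia.
- by rewrite sub_shift_nat // subSnn step_1.
Qed.

Lemma alphaE m x t : alpha K n m x t = (t == run_tuple m x)%:R.
Proof.
by rewrite ffunE -val_run_tuple val_eqE; have /andP[-> _] := allowed_run_tuple m x; rewrite andbT.
Qed.

Lemma betaE m x t : s = 2%N ->
  beta K n m x t = \sum_(1 <= j < m.+1) (-1) ^+ (m - j) * (t == skip_tuple m x j)%:R.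
Proof.
move=> hs; rewrite ffunE big_nat_cond [RHS]big_nat_cond; apply: eq_bigr => j /andP [hj _].
have hj' : (j <= m.+1)%N by lia.
rewrite ffunE -val_skip_tuple // val_eqE.
by have /andP[-> _] := allowed_skip_tuple x hs hj'; rewrite andbT.
Qed.

Lemma run_tuple_inj m : injective (run_tuple m).
Proof. by move=> a x /(congr1 (fun t : m.+1.-tuple Z => t`_0)); rewrite !nth_mkseq_tuple // !addr0. Qed.

Lemma shift_succ_neq (a : Z) k : a + k.+1%:R != a + k%:R.
Proof.
apply/eqP => /addrI; rewrite mulrS => /eqP.
by rewrite -subr_eq0 addrK oner_eq0.
Qed.

Lemma run_tuple_neq_skip m a x j : (0 < j <= m)%N -> run_tuple m a != skip_tuple m x j.
Proof.
move=> hj; apply/eqP => h.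
have /(congr1 (fun t : m.+1.-tuple Z => t`_0)) := h; rewrite !nth_mkseq_tuple // ifT; last lia.
rewrite !addr0 => hax; subst x.
have /(congr1 (fun t : m.+1.-tuple Z => t`_m)) := h; rewrite !nth_mkseq_tuple // ifF; last lia.
by move/eqP; rewrite eq_sym (negbTE (shift_succ_neq _ _)).
Qed.

Lemma skip_tuple_last_eq m a x j : (0 < j <= m)%N ->
  (skip_tuple m a m == skip_tuple m x j) = (a == x) && (j == m).
Proof.
move=> hj; apply/eqP/andP => [h|[/eqP -> /eqP ->] //].
have /(congr1 (fun t : m.+1.-tuple Z => t`_0)) := h; rewrite !nth_mkseq_tuple // !ifT; try lia.
rewrite !addr0 => hax; subst x; split => //.
case: (ltngtP j m) => // hjm; last lia.
have /(congr1 (fun t : m.+1.-tuple Z => t`_j)) := h.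
rewrite !nth_mkseq_tuple ?ltnn ?hjm /=; try lia.
by move/eqP; rewrite eq_sym (negbTE (shift_succ_neq _ _)).
Qed.

Lemma alpha_run_tuple m x a : alpha K n m x (run_tuple m a) = (x == a)%:R.
Proof. by rewrite alphaE (inj_eq (@run_tuple_inj m)) eq_sym. Qed.

Lemma beta_run_tuple m x a : s = 2%N -> (0 < m)%N -> beta K n m x (run_tuple m a) = 0.
Proof.
move=> hs hm; rewrite betaE // big_nat_cond big1 // => j /andP [hj _].
by rewrite (negbTE (run_tuple_neq_skip _ _ _)) ?mulr0 //; lia.
Qed.

Lemma alpha_skip_tuple m x a : (0 < m)%N -> alpha K n m x (skip_tuple m a m) = 0.
Proof. by move=> hm; rewrite alphaE eq_sym (negbTE (run_tuple_neq_skip _ _ _)) //; lia. Qed.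

Lemma beta_skip_tuple m x a : s = 2%N -> (0 < m)%N ->
  beta K n m x (skip_tuple m a m) = (x == a)%:R.
Proof.
move=> hs hm; rewrite betaE // big_nat_recr //= big_nat_cond big1 ?add0r.
  by rewrite subnn mul1r skip_tuple_last_eq ?eqxx ?andbT 1?eq_sym //; lia.
move=> j /andP [hj _]; rewrite skip_tuple_last_eq; last lia.
by rewrite (_ : (j == m) = false) ?andbF ?mulr0 //; lia.
Qed.

Definition s_one_tuple (a : Z) : 3.-tuple Z := [tuple a; a + s%:R; a + 1 + s%:R].

Lemma allowed_one_s_tuple a : allowed arr (val (one_s_tuple a)).
Proof.
apply/(allowedP 0 circ_arr_irr) => -[|[|]] // _; rewrite circ_arrE /=.
  by rewrite (_ : _ - _ = 1) ?step_1 //; ring.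
by rewrite (_ : _ - _ = s%:R) ?step_s //; ring.
Qed.

Lemma allowed_s_one_tuple a : allowed arr (val (s_one_tuple a)).
Proof.
apply/(allowedP 0 circ_arr_irr) => -[|[|]] // _; rewrite circ_arrE /=.
  by rewrite (_ : _ - _ = s%:R) ?step_s //; ring.
by rewrite (_ : _ - _ = 1) ?step_1 //; ring.
Qed.

Lemma gammaE x t :
  gamma K n s x t = (t == one_s_tuple x)%:R - (t == s_one_tuple x)%:R.
Proof.
have /andP[reg1 _] := allowed_one_s_tuple x; have /andP[reg2 _] := allowed_s_one_tuple x.
by rewrite ffunE !ffunE -!val_eqE; move: reg1 reg2 => /= -> ->; rewrite !andbT.
Qed.

Lemma gamma_one_s_tuple x a : gamma K n s x (one_s_tuple a) = (x == a)%:R.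
Proof.
have [<-|hxa] := eqVneq x a; rewrite gammaE -!val_eqE /= !eqseq_cons ?eqxx.
  by rewrite (inj_eq (addrI x)) (negbTE one_neq_s) subr0.
by rewrite eq_sym (negbTE hxa) subrr.
Qed.

Lemma alpha_Omega N x : s = 2%N -> Omega arr (alpha K n N.+1 x).
Proof.
move=> hs; apply: (Omega_intro (v0 := 0) circ_arr_irr).
  apply/forallP => t; apply/implyP; rewrite alphaE.
  case: (t =P run_tuple N.+1 x) => [-> _|_]; first exact: allowed_run_tuple.
  by rewrite mulr0n eqxx.
move=> t i hi hna; apply: big1 => v _; rewrite alphaE.
case: eqP => [h|_] //; case/negP: hna.
have := congr1 (fun t : N.+2.-tuple Z => (t`_i, t`_i.+2)) h.
rewrite !nth_upd ?ifF ?nth_mkseq_tuple //=; try lia.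
case=> -> ->; rewrite circ_arrE sub_shift_nat; last lia.
by rewrite (_ : (i.+2 - i)%N = s) ?step_s //; lia.
Qed.

Lemma beta_Omega N x : s = 2%N -> Omega arr (beta K n N.+1 x).
Proof.
move=> hs; apply: (Omega_intro (v0 := 0) circ_arr_irr).
  apply/forallP => t; apply/implyP; apply: contraR => hna.
  apply/eqP; rewrite betaE // big_nat_cond big1 // => j /andP [hj _].
  case: eqP => [h|_]; last by rewrite mulr0.
  by case/negP: hna; rewrite h allowed_skip_tuple //; lia.
move=> t i hi hna; set m := N.+1.
pose E j := [forall p : 'I_m.+1, (val p != i.+1) ==> (t`_p == (skip_tuple m x j)`_p)].
transitivity (\sum_(1 <= j < m.+1) (-1) ^+ (m - j) * (E j)%:R : K).
  under eq_bigr => v _ do rewrite betaE //.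
  rewrite exchange_big; apply: eq_big_nat => j hj; rewrite -mulr_sumr.
  under eq_bigr => v _ do rewrite -val_eqE.
  by rewrite sum_upd_indicator ?size_tuple //; lia.
(* only the two paths skipping a vertex next to position [i + 1] agree with [t] off [i + 1] *)
have E0 j : j != i.+1 -> j != i.+2 -> (0 < j <= m)%N -> E j = false.
  move=> h1 h2 hj; apply/negP => /forallP hE; case/negP: hna.
  have hi0 : (i < m.+1)%N by lia.
  have hi2 : (i.+2 < m.+1)%N by lia.
  have := hE (Ordinal hi0); have := hE (Ordinal hi2).
  rewrite !nth_mkseq_tuple // (ltn_eqF (ltnSn i)) (gtn_eqF (ltnSn i.+1)) /=.
  move=> /eqP -> /eqP ->; rewrite circ_arrE.
  case: (ltnP i.+2 j) => h3; case: (ltnP i j) => h4 /=; try lia;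
    rewrite sub_shift_nat; try lia;
    by rewrite (_ : (_ - _)%N = s) ?step_s //; lia.
have E12 : E i.+1 = E i.+2.
  apply: eq_forallb => p; case: eqP => // hp; rewrite !nth_mkseq_tuple //=.
  case: (ltngtP p i.+1) hp => // h _; [rewrite ifT | rewrite ifF] => //; lia.
rewrite (@big_cat_nat _ _ _ i.+1) //=; try lia.
rewrite (@big_cat_nat _ _ _ i.+3 i.+1) //=; try lia.
rewrite big_nat_cond big1 ?add0r; last first.
  by move=> j /andP [hj _]; rewrite E0 ?mulr0 //; lia.
rewrite [X in _ + X]big_nat_cond [X in _ + X]big1 ?addr0; last first.
  by move=> j /andP [hj _]; rewrite E0 ?mulr0 //; lia.
rewrite big_ltn // big_ltn // big_geq // addr0 E12.
by rewrite (_ : (m - i.+1 = (m - i.+2).+1)%N) ?exprS; [ring | lia].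
Qed.

Lemma gamma_Omega x : Omega arr (gamma K n s x).
Proof.
apply: (Omega_intro (v0 := 0) circ_arr_irr).
  apply/forallP => t; apply/implyP; rewrite gammaE.
  have [->|_] := eqVneq t (one_s_tuple x); first by move=> _; apply: allowed_one_s_tuple.
  have [->|_] := eqVneq t (s_one_tuple x); first by move=> _; apply: allowed_s_one_tuple.
  by rewrite subrr eqxx.
move=> t i hi _; have -> : i = 0%N by lia.
under eq_bigr => v _ do rewrite gammaE -!val_eqE.
rewrite sumrB !sum_upd_indicator //.
apply/eqP; rewrite subr_eq0; apply/eqP; congr (nat_of_bool _)%:R.
by apply: eq_forallb => -[[|[|[|p]]] hp].
Qed.

Lemma Omega_basis_s2 m : s = 2%N -> (1 <= m)%N ->
  is_basis (@Omega K _ arr m)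
    (fun p : bool * Z => if p.1 then alpha K n m p.2 else beta K n m p.2).
Proof.
move=> hs; case: m => [|N] // _.
apply: (is_basis_dual (tau := fun p : bool * Z =>
  if p.1 then run_tuple N.+1 p.2 else skip_tuple N.+1 p.2 N.+1)).
- by case=> -[] x; [apply: alpha_Omega | apply: beta_Omega].
- by case=> -[] x [[] a] /=; rewrite ?alpha_run_tuple ?beta_run_tuple ?alpha_skip_tuple
    ?beta_skip_tuple.
- move=> u c hu; apply: Omega_sub_lincomb => // -[[] x].
  + exact: alpha_Omega.
  + exact: beta_Omega.
- by move=> w hw hw0; apply: Omega_eq0_s2 => // a; [apply: (hw0 (true, a)) | apply: (hw0 (false, a))].
Qed.

Lemma Omega2_basis_s_neq2 : s != 2%N ->
  is_basis (@Omega K _ arr 2) (fun a : Z => gamma K n s a).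
Proof.
move=> hs; apply: (is_basis_dual (tau := one_s_tuple)) => //.
- exact: gamma_Omega.
- exact: gamma_one_s_tuple.
- by move=> u c hu; apply: Omega_sub_lincomb => // x; apply: gamma_Omega.
- by move=> w hw; apply: Omega2_eq0.
Qed.

End Circulant.

Theorem mainTheorem7 (K : fieldType) (n s : nat) :
  [pchar K] =i pred0 -> (5 <= n)%N -> (1 < s)%N -> (s.*2 < n)%N ->
  (s = 2%N -> forall m : nat, (1 <= m)%N ->
     is_basis (@Omega K _ (circ_arr n s) m)
       (fun p : bool * 'Z_n => if p.1 then alpha K n m p.2 else beta K n m p.2))
  /\
  (s <> 2%N ->
     is_basis (@Omega K _ (circ_arr n s) 2) (fun a : 'Z_n => gamma K n s a)
     /\ forall m : nat, (3 <= m)%N ->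
          forall u : chain K 'Z_n m, @Omega K _ (circ_arr n s) m u -> u = 0).
Proof.
move=> _ _ s_gt1 s2_lt_n; split; first by move=> hs m; apply: Omega_basis_s2.
move=> /eqP hs; split; first exact: Omega2_basis_s_neq2.
by case=> [|[|[|N]]] // _ u; apply: Omega_eq0_s_neq2.
Qed.
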